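(* For all $x\in[0,\infty)$, $$0\le\lim_{k\to\infty}\frac{x\,\mathcal{S}_{k+1}(x)}{\mathcal{S}_k(x)}\le 2,$$ where $\mathcal{S}_k(x)={}_2F_1\!\left(\frac{k}{2},\frac{k+1}{2};\frac{2k+1}{2};-x^2\right)$.
   Context: ${}_2F_1(a,b;c;z)$ denotes the Gauss hypergeometric function. *)

From Stdlib Require Import Reals.
From Coquelicot Require Import Coquelicot.
Open Scope R_scope.

Fixpoint poch (a : R) (n : nat) : R :=
  match n with
  | O => 1
  | S m => poch a m * (a + INR m)
  end.

Definition hyp2F1_series (a b c z : R) : R :=
  Series (fun n => poch a n * poch b n / (poch c n * INR (Factorial.fact n)) * z ^ n).

(* The Gauss hypergeometric function 2F1(a,b;c;z) on the real domain z < 1: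
   the power series for |z| < 1, and for z <= -1 its analytic continuation,
   given by the Pfaff transformation
     2F1(a,b;c;z) = (1-z)^(-a) 2F1(a, c-b; c; z/(z-1)),
   where z/(z-1) lies in [1/2, 1), inside the disc of convergence.
   (Values for z >= 1 are irrelevant and unspecified.) *)
Definition hyp2F1 (a b c z : R) : R :=
  if Rlt_dec (Rabs z) 1 then hyp2F1_series a b c z
  else Rpower (1 - z) (- a) * hyp2F1_series a (c - b) c (z / (z - 1)).

Definition Sk (k : nat) (x : R) : R :=
  hyp2F1 (INR k / 2) ((INR k + 1) / 2) ((2 * INR k + 1) / 2) (- x ^ 2).

(* For x^2 < 1, S_k(x) is the Gauss series at -x^2; for x^2 >= 1 the definition uses the
   Pfaff form S_k = (1+x^2)^(-k/2) 2F1(k/2, k/2; k+1/2; w), w = x^2/(1+x^2), a series with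
   positive coefficients.  In both regimes
     x^2 k^2 S_(k+1) = (4k^2 - 1) (S_(k-1) - S_k):
   for x^2 < 1 by a contiguous relation; for x^2 >= 1 by the contiguous relation in c,
   once the odd power of sqrt(1+x^2) has been absorbed by Euler's transformation
   2F1(a+1/2, b+1/2; a+b+1/2; w) = (1-w)^(-1/2) 2F1(a, b; a+b+1/2; w), whose coefficient
   identity is proved by creative telescoping.
   Positivity of S_k is clear for x^2 >= 1; for 0 < x^2 < 1 a first sign change would make
   |S_k| grow like (3/x^2)^k, against the a priori bound |S_k| <= 3^k/(1-x^2).
   The ratios t_k = S_k/S_(k+1) then satisfy t_k = 1 + a_k/t_(k+1) with a_k -> x^2/4, and a
   two-step contraction gives t_k -> (1 + sqrt(1+x^2))/2, so the limit is
   2x/(1 + sqrt(1+x^2)), which lies in [0, 2). *)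

From Stdlib Require Import Reals Lra Lia Psatz.
From Coquelicot Require Import Coquelicot.
Open Scope R_scope.

Lemma INR_fact_S n : INR (Factorial.fact (S n)) = (INR n + 1) * INR (Factorial.fact n).
Proof. rewrite fact_simpl, mult_INR, S_INR. ring. Qed.

Lemma poch_shift a n : poch (a + 1) n * a = poch a n * (a + INR n).
Proof.
  induction n as [|n IH]; cbn [poch]; [simpl; ring|].
  rewrite S_INR.
  transitivity (poch (a + 1) n * a * (a + 1 + INR n)); [ring|].
  rewrite IH. ring.
Qed.

Lemma poch_Sl a n : poch a (S n) = a * poch (a + 1) n.
Proof. cbn [poch]. rewrite <- poch_shift. ring. Qed.

Lemma poch_shift_div a n : a <> 0 -> poch (a + 1) n = poch a n * (a + INR n) / a.
Proof. intros Ha. rewrite <- poch_shift. field. exact Ha. Qed.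

Lemma poch_Sl_2 c n : 0 < c ->
  poch c (S n) = c * (c + 1) * poch (c + 2) n / (c + 1 + INR n).
Proof.
  intros Hc. pose proof (pos_INR n) as Hn.
  rewrite poch_Sl. pose proof (poch_shift (c + 1) n) as E.
  replace (c + 1 + 1) with (c + 2) in E by ring.
  apply (Rmult_eq_reg_r (c + 1 + INR n)); [|lra].
  unfold Rdiv. rewrite Rmult_assoc, <- E. field. lra.
Qed.

Lemma poch_pos a n : 0 < a -> 0 < poch a n.
Proof.
  intros Ha. induction n; cbn [poch]; [lra|].
  pose proof (pos_INR n). apply Rmult_lt_0_compat; lra.
Qed.

Lemma poch_nonneg a n : 0 <= a -> 0 <= poch a n.
Proof.
  intros Ha. induction n; cbn [poch]; [lra|].
  pose proof (pos_INR n). apply Rmult_le_pos; lra.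
Qed.

Lemma poch_le a b n : 0 <= a <= b -> poch a n <= poch b n.
Proof.
  intros Hab. induction n; cbn [poch]; [lra|].
  pose proof (pos_INR n). pose proof (poch_nonneg a n).
  apply Rmult_le_compat; lra.
Qed.

Lemma poch_1 n : poch 1 n = INR (Factorial.fact n).
Proof. induction n; cbn [poch]; [reflexivity|]. rewrite INR_fact_S, IHn. ring. Qed.

Lemma is_lim_seq_inv_shift_INR g : 0 < g -> is_lim_seq (fun n => / (g + INR n)) 0.
Proof.
  intros Hg. change (Finite 0) with (Rbar_inv p_infty).
  apply is_lim_seq_inv; [|discriminate].
  apply (is_lim_seq_le_p_loc INR); [|exact is_lim_seq_INR].
  exists 0%nat. intros n _. lra.
Qed.

Lemma is_lim_seq_ratio_shift_INR a g : 0 < g ->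
  is_lim_seq (fun n => (a + INR n) / (g + INR n)) 1.
Proof.
  intros Hg.
  apply (is_lim_seq_ext (fun n => 1 + (a - g) * / (g + INR n))).
  { intros n. pose proof (pos_INR n). field. lra. }
  replace (Finite 1) with (Finite (1 + (a - g) * 0)) by (f_equal; ring).
  apply is_lim_seq_plus'; [apply is_lim_seq_const|].
  apply (is_lim_seq_scal_l _ (a - g) 0), is_lim_seq_inv_shift_INR, Hg.
Qed.

(* Ratio test in a form that tolerates vanishing terms, unlike [ex_series_DAlembert]. *)
Lemma ex_series_Rabs_ratio (u r : nat -> R) (l : R) :
  (forall n, Rabs (u (S n)) <= r n * Rabs (u n)) -> is_lim_seq r l -> l < 1 ->
  ex_series (fun n => Rabs (u n)).
Proof.
  intros Hu Hr Hl.
  set (q := Rmax 0 ((1 + l) / 2)).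
  assert (Hq : 0 <= q < 1) by (unfold q; split; [apply Rmax_l | apply Rmax_lub_lt; lra]).
  apply is_lim_seq_spec in Hr.
  destruct (Hr (mkposreal ((1 - l) / 2) ltac:(lra))) as [N HN]; cbn in HN.
  assert (Hgeom : forall p, Rabs (u (N + p)%nat) <= Rabs (u N) * q ^ p).
  { induction p as [|p IH]; [rewrite Nat.add_0_r; simpl; lra|].
    replace (N + S p)%nat with (S (N + p)) by lia.
    assert (Hrq : r (N + p)%nat <= q).
    { specialize (HN (N + p)%nat ltac:(lia)). apply Rabs_def2 in HN.
      unfold q. eapply Rle_trans; [|apply Rmax_r]. lra. }
    pose proof (Rabs_pos (u (N + p)%nat)). pose proof (Rabs_pos (u N)).
    eapply Rle_trans; [apply Hu|]. simpl pow. nra. }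
  apply (ex_series_incr_n _ N).
  apply (@ex_series_le R_AbsRing R_CompleteNormedModule _ (fun p => Rabs (u N) * q ^ p)).
  - intros p. change (norm (Rabs (u (N + p)%nat))) with (Rabs (Rabs (u (N + p)%nat))).
    rewrite Rabs_Rabsolu. apply Hgeom.
  - apply (ex_series_scal_l (Rabs (u N)) (fun p => q ^ p)).
    apply ex_series_geom. rewrite Rabs_pos_eq; lra.
Qed.

Lemma Series_diff_shift (u v f : nat -> R) (lam z : R) :
  ex_series (fun n => u n * z ^ n) -> ex_series (fun n => v n * z ^ n) ->
  u 0%nat = v 0%nat -> (forall n, u (S n) - v (S n) = lam * f n) ->
  Series (fun n => u n * z ^ n) - Series (fun n => v n * z ^ n) =
  lam * z * Series (fun n => f n * z ^ n).
Proof.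
  intros Hu Hv H0 HS.
  rewrite <- Series_minus by assumption.
  rewrite Series_incr_1 by (apply (ex_series_minus _ _ Hu Hv)).
  rewrite H0, Rminus_diag, Rplus_0_l, <- Series_scal_l.
  apply Series_ext. intros n. cbn [pow].
  rewrite <- Rmult_minus_distr_r, HS. ring.
Qed.

Lemma Series_mult_pow (a b : nat -> R) w :
  ex_series (fun n => Rabs (a n * w ^ n)) -> ex_series (fun n => Rabs (b n * w ^ n)) ->
  Series (fun n => a n * w ^ n) * Series (fun n => b n * w ^ n) =
  Series (fun n => sum_f_R0 (fun m => a m * b (n - m)%nat) n * w ^ n).
Proof.
  intros Ha Hb. symmetry. apply is_series_unique.
  eapply is_series_ext;
    [|exact (is_series_mult _ _ _ _ (Series_correct _ (ex_series_Rabs _ Ha))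
                                    (Series_correct _ (ex_series_Rabs _ Hb)) Ha Hb)].
  intros n. cbn. rewrite Rmult_comm, scal_sum. apply sum_eq. intros m Hm.
  replace (w ^ n) with (w ^ m * w ^ (n - m)) by (rewrite <- pow_add; f_equal; lia).
  ring.
Qed.

Lemma Series_pow_abs_le (c : nat -> R) (M z : R) :
  (forall n, Rabs (c n) <= M) -> Rabs z < 1 ->
  ex_series (fun n => Rabs (c n * z ^ n)) /\
  Rabs (Series (fun n => c n * z ^ n)) <= M / (1 - Rabs z).
Proof.
  intros Hc Hz.
  assert (Hgeom : is_series (fun n => M * Rabs z ^ n) (M * / (1 - Rabs z))).
  { refine (is_series_scal_l M _ _ (is_series_geom _ _)). rewrite Rabs_Rabsolu. exact Hz. }
  assert (Hle : forall n, 0 <= Rabs (c n * z ^ n) <= M * Rabs z ^ n).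
  { intros n. split; [apply Rabs_pos|].
    rewrite Rabs_mult, <- RPow_abs.
    apply Rmult_le_compat_r; [apply pow_le, Rabs_pos | apply Hc]. }
  assert (Hex : ex_series (fun n => Rabs (c n * z ^ n))).
  { apply (@ex_series_le R_AbsRing R_CompleteNormedModule _ (fun n => M * Rabs z ^ n)).
    - intros n. change norm with Rabs. rewrite Rabs_Rabsolu. apply Hle.
    - eexists. exact Hgeom. }
  split; [exact Hex|].
  eapply Rle_trans; [apply Series_Rabs, Hex|].
  eapply Rle_trans; [apply Series_le; [exact Hle | eexists; exact Hgeom]|].
  rewrite (is_series_unique _ _ Hgeom). right. reflexivity.
Qed.

Lemma sum_f_R0_creative_telescoping (T : nat -> nat -> R) (G : nat -> R) (A B : R) n :
  (forall m, (m <= n)%nat -> A * T (S n) m - B * T n m = G (S m) - G m) ->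
  G 0%nat = 0 -> G (S n) = - A * T (S n) (S n) ->
  A * sum_f_R0 (T (S n)) (S n) = B * sum_f_R0 (T n) n.
Proof.
  intros HG H0 Hlast.
  assert (Hpartial : forall p, (p <= n)%nat ->
            A * sum_f_R0 (T (S n)) p - B * sum_f_R0 (T n) p = G (S p)).
  { induction p as [|p IH]; intros Hp; cbn [sum_f_R0].
    - rewrite HG by lia. lra.
    - specialize (IH ltac:(lia)). specialize (HG (S p) Hp). lra. }
  rewrite tech5. specialize (Hpartial n (le_n n)). lra.
Qed.

(** * Coefficients of the Gauss series *)

Definition hyp_coef (a b c : R) (n : nat) : R :=
  poch a n * poch b n / (poch c n * INR (Factorial.fact n)).

Lemma hyp_coef_0 a b c : hyp_coef a b c 0 = 1.
Proof. unfold hyp_coef. cbn. field. Qed.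

Lemma hyp_coef_S a b c n : 0 < c ->
  hyp_coef a b c (S n) =
  hyp_coef a b c n * ((a + INR n) * (b + INR n)) / ((c + INR n) * (INR n + 1)).
Proof.
  intros Hc. unfold hyp_coef. cbn [poch]. rewrite INR_fact_S.
  pose proof (poch_pos c n Hc). pose proof (INR_fact_lt_0 n). pose proof (pos_INR n).
  field. lra.
Qed.

Lemma hyp_coef_nonneg a b c n : 0 <= a -> 0 <= b -> 0 < c -> 0 <= hyp_coef a b c n.
Proof.
  intros Ha Hb Hc. unfold hyp_coef.
  pose proof (poch_pos c n Hc). pose proof (INR_fact_lt_0 n).
  apply Rmult_le_pos.
  - apply Rmult_le_pos; apply poch_nonneg; lra.
  - apply Rlt_le, Rinv_0_lt_compat. nra.
Qed.

Lemma hyp_coef_le_1 a b c n : 0 <= a <= c -> 0 < c -> 0 <= b <= 1 -> hyp_coef a b c n <= 1.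
Proof.
  intros Hac Hc Hb. unfold hyp_coef.
  pose proof (poch_pos c n Hc). pose proof (INR_fact_lt_0 n).
  pose proof (poch_le a c n Hac). pose proof (poch_le b 1 n Hb).
  pose proof (poch_nonneg a n (proj1 Hac)). pose proof (poch_nonneg b n (proj1 Hb)).
  rewrite poch_1 in *.
  apply (Rmult_le_reg_r (poch c n * INR (Factorial.fact n))); [nra|].
  unfold Rdiv. rewrite Rmult_assoc, Rinv_l by nra. nra.
Qed.

Lemma hyp_coef_shift_le a b c n : 0 < a <= c -> 0 <= b ->
  hyp_coef b (a + 1) (c + 1) n <= c / a * hyp_coef a b c n.
Proof.
  intros Hac Hb. pose proof (pos_INR n).
  assert (E : hyp_coef b (a + 1) (c + 1) n * (a * (c + INR n)) =
              hyp_coef a b c n * ((a + INR n) * c)).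
  { unfold hyp_coef. rewrite !poch_shift_div by lra.
    pose proof (poch_pos c n ltac:(lra)). pose proof (INR_fact_lt_0 n).
    field. repeat split; lra. }
  pose proof (hyp_coef_nonneg a b c n ltac:(lra) Hb ltac:(lra)).
  apply (Rmult_le_reg_r (a * (c + INR n))); [nra|].
  rewrite E.
  replace (c / a * hyp_coef a b c n * (a * (c + INR n)))
    with (hyp_coef a b c n * ((c + INR n) * c)) by (field; lra).
  apply Rmult_le_compat_l; nra.
Qed.

Lemma hyp_coef_contig_c a b c n : 0 < c ->
  hyp_coef a b c (S n) - hyp_coef a b (c + 1) (S n) =
  a * b / (c * (c + 1)) * hyp_coef (a + 1) (b + 1) (c + 2) n.
Proof.
  intros Hc. unfold hyp_coef.
  rewrite (poch_Sl_2 c), (poch_Sl (c + 1)), !(poch_Sl _ n), INR_fact_S by lra.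
  replace (c + 1 + 1) with (c + 2) by ring.
  pose proof (poch_pos (c + 2) n ltac:(lra)). pose proof (INR_fact_lt_0 n). pose proof (pos_INR n).
  field. repeat split; lra.
Qed.

Lemma hyp_coef_contig_ac a b c n : 0 < c ->
  hyp_coef a b c (S n) - hyp_coef (a + 1) b (c + 1) (S n) =
  b * (a - c) / (c * (c + 1)) * hyp_coef (a + 1) (b + 1) (c + 2) n.
Proof.
  intros Hc. unfold hyp_coef.
  rewrite (poch_Sl_2 c), (poch_Sl (c + 1)), (poch_Sl a), (poch_Sl b), INR_fact_S by lra.
  cbn [poch]. replace (c + 1 + 1) with (c + 2) by ring.
  pose proof (poch_pos (c + 2) n ltac:(lra)). pose proof (INR_fact_lt_0 n). pose proof (pos_INR n).
  field. repeat split; lra.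
Qed.

Lemma hyp_coef_half_S n :
  hyp_coef (1/2) 1 1 (S n) = hyp_coef (1/2) 1 1 n * (1/2 + INR n) / (INR n + 1).
Proof. rewrite hyp_coef_S by lra. pose proof (pos_INR n). field. lra. Qed.

Lemma hyp_coef_half_conv n :
  sum_f_R0 (fun m => hyp_coef (1/2) 1 1 m * hyp_coef (1/2) 1 1 (n - m)) n = 1.
Proof.
  set (e := hyp_coef (1/2) 1 1).
  induction n as [|n IH]; [cbn; unfold e; rewrite hyp_coef_0; ring|].
  set (T := fun n m => e m * e (n - m)%nat).
  transitivity (sum_f_R0 (T n) n); [|exact IH].
  rewrite <- (Rmult_1_l (sum_f_R0 (T n) n)), <- (Rmult_1_l (sum_f_R0 _ (S n))).
  apply (sum_f_R0_creative_telescoping T (fun m => - INR m / (INR n + 1) * T (S n) m)).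
  - intros m Hm. unfold T.
    replace (S n - m)%nat with (S (n - m)) by lia.
    replace (S n - S m)%nat with (n - m)%nat by lia.
    rewrite !hyp_coef_half_S, minus_INR, S_INR by exact Hm.
    pose proof (pos_INR m). pose proof (le_INR m n Hm).
    unfold e. field. lra.
  - cbn. field. pose proof (pos_INR n). lra.
  - rewrite S_INR. field. pose proof (pos_INR n). lra.
Qed.

Lemma hyp_coef_euler_conv a b n : 0 < a + b + 1/2 ->
  sum_f_R0 (fun m => hyp_coef (1/2) 1 1 m * hyp_coef a b (a + b + 1/2) (n - m)) n =
  hyp_coef (a + 1/2) (b + 1/2) (a + b + 1/2) n.
Proof.
  intros Hc. set (c := a + b + 1/2) in *. set (e := hyp_coef (1/2) 1 1).
  induction n as [|n IH]; [cbn; unfold e; rewrite !hyp_coef_0; ring|].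
  set (T := fun n m => e m * hyp_coef a b c (n - m)%nat).
  set (A := (c + INR n) * (INR n + 1)).
  assert (HA : 0 < A) by (unfold A; pose proof (pos_INR n); nra).
  apply (Rmult_eq_reg_l A); [|lra].
  change (sum_f_R0 _ (S n)) with (sum_f_R0 (T (S n)) (S n)).
  rewrite (sum_f_R0_creative_telescoping T
             (fun m => INR m * (INR m - 2 * INR n - c - 1) * T (S n) m) A
             ((a + 1/2 + INR n) * (b + 1/2 + INR n))).
  - change (sum_f_R0 (T n) n) with (sum_f_R0 (fun m => e m * hyp_coef a b c (n - m)) n).
    rewrite IH, (hyp_coef_S _ _ c) by exact Hc. unfold A. field. pose proof (pos_INR n). lra.
  - intros m Hm. unfold T, A.
    replace (S n - m)%nat with (S (n - m)) by lia.
    replace (S n - S m)%nat with (n - m)%nat by lia.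
    rewrite hyp_coef_half_S, hyp_coef_S, minus_INR, S_INR by (assumption || exact Hc).
    pose proof (pos_INR m). pose proof (le_INR m n Hm).
    unfold e, c. field. unfold c in Hc. lra.
  - cbn. ring.
  - unfold T, A. rewrite S_INR. ring.
Qed.

(** * The Gauss series inside the unit disc *)

Lemma hyp2F1_seriesE a b c z :
  hyp2F1_series a b c z = Series (fun n => hyp_coef a b c n * z ^ n).
Proof. reflexivity. Qed.

Lemma ex_series_hyp_coef a b c z : 0 <= a -> 0 <= b -> 0 < c -> Rabs z < 1 ->
  ex_series (fun n => Rabs (hyp_coef a b c n * z ^ n)).
Proof.
  intros Ha Hb Hc Hz.
  apply (ex_series_Rabs_ratio _
           (fun n => Rabs z * ((a + INR n) / (c + INR n)) * ((b + INR n) / (1 + INR n)))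
           (Rabs z)); [| |exact Hz].
  - intros n. pose proof (pos_INR n).
    rewrite hyp_coef_S, <- tech_pow_Rmult by exact Hc.
    set (q := (a + INR n) * (b + INR n) / ((c + INR n) * (INR n + 1))).
    assert (Hq : 0 <= q) by (apply Rdiv_le_0_compat; nra).
    replace (hyp_coef a b c n * ((a + INR n) * (b + INR n)) / ((c + INR n) * (INR n + 1))
             * (z * z ^ n))
      with (hyp_coef a b c n * z ^ n * (q * z)) by (unfold q; field; lra).
    rewrite Rabs_mult, (Rabs_mult q), (Rabs_pos_eq q) by exact Hq.
    right. unfold q. field. lra.
  - replace (Finite (Rabs z)) with (Finite (Rabs z * 1 * 1)) by (f_equal; ring).
    apply is_lim_seq_mult'; [apply is_lim_seq_mult'; [apply is_lim_seq_const|]|];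
      apply is_lim_seq_ratio_shift_INR; lra.
Qed.

Lemma hyp2F1_series_sym a b c z : hyp2F1_series a b c z = hyp2F1_series b a c z.
Proof.
  apply Series_ext. intros n. unfold hyp_coef. rewrite (Rmult_comm (poch a n)). reflexivity.
Qed.

Lemma hyp2F1_series_0_l b c z : 0 <= b -> 0 < c -> Rabs z < 1 -> hyp2F1_series 0 b c z = 1.
Proof.
  intros Hb Hc Hz. rewrite hyp2F1_seriesE.
  rewrite Series_incr_1 by (apply ex_series_Rabs, ex_series_hyp_coef; lra).
  cbv beta. rewrite hyp_coef_0, pow_O.
  rewrite (Series_ext _ (fun n => 0 * 0)), Series_scal_l; [ring|].
  intros n. unfold hyp_coef. rewrite poch_Sl. unfold Rdiv. ring.
Qed.

Lemma hyp2F1_series_ge_1 a b c w : 0 <= a -> 0 <= b -> 0 < c -> 0 <= w < 1 ->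
  1 <= hyp2F1_series a b c w.
Proof.
  intros Ha Hb Hc Hw.
  assert (Hex : ex_series (fun n => hyp_coef a b c n * w ^ n))
    by (apply ex_series_Rabs, ex_series_hyp_coef; [..|rewrite Rabs_pos_eq]; lra).
  assert (Hpos : forall n, 0 <= hyp_coef a b c n * w ^ n)
    by (intros n; apply Rmult_le_pos; [apply hyp_coef_nonneg | apply pow_le]; lra).
  rewrite hyp2F1_seriesE, Series_incr_1 by exact Hex.
  cbv beta. rewrite hyp_coef_0, Rmult_1_l, pow_O.
  assert (0 <= Series (fun n => hyp_coef a b c (S n) * w ^ S n)); [|lra].
  replace 0 with (Series (fun _ => 0 * 0)) at 1
    by (rewrite Series_scal_l; ring).
  apply Series_le; [intros n; rewrite Rmult_0_l; split; [lra | apply Hpos]|].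
  apply (ex_series_incr_1 (fun n => hyp_coef a b c n * w ^ n)), Hex.
Qed.

Lemma hyp2F1_series_contig_c a b c z : 0 <= a -> 0 <= b -> 0 < c -> Rabs z < 1 ->
  hyp2F1_series a b c z - hyp2F1_series a b (c + 1) z =
  a * b / (c * (c + 1)) * z * hyp2F1_series (a + 1) (b + 1) (c + 2) z.
Proof.
  intros Ha Hb Hc Hz.
  apply (Series_diff_shift (hyp_coef a b c) (hyp_coef a b (c + 1))).
  - apply ex_series_Rabs, ex_series_hyp_coef; assumption.
  - apply ex_series_Rabs, ex_series_hyp_coef; lra.
  - rewrite !hyp_coef_0. reflexivity.
  - intros n. apply hyp_coef_contig_c, Hc.
Qed.

Lemma hyp2F1_series_contig_ac a b c z : 0 <= a -> 0 <= b -> 0 < c -> Rabs z < 1 ->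
  hyp2F1_series a b c z - hyp2F1_series (a + 1) b (c + 1) z =
  b * (a - c) / (c * (c + 1)) * z * hyp2F1_series (a + 1) (b + 1) (c + 2) z.
Proof.
  intros Ha Hb Hc Hz.
  apply (Series_diff_shift (hyp_coef a b c) (hyp_coef (a + 1) b (c + 1))).
  - apply ex_series_Rabs, ex_series_hyp_coef; assumption.
  - apply ex_series_Rabs, ex_series_hyp_coef; lra.
  - rewrite !hyp_coef_0. reflexivity.
  - intros n. apply hyp_coef_contig_ac, Hc.
Qed.

Lemma hyp2F1_series_half w : 0 <= w < 1 -> hyp2F1_series (1/2) 1 1 w = / sqrt (1 - w).
Proof.
  intros Hw. assert (Hz : Rabs w < 1) by (rewrite Rabs_pos_eq; lra).
  assert (Hge := hyp2F1_series_ge_1 (1/2) 1 1 w ltac:(lra) ltac:(lra) ltac:(lra) Hw).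
  assert (Hsq : hyp2F1_series (1/2) 1 1 w * hyp2F1_series (1/2) 1 1 w = / (1 - w)).
  { rewrite !hyp2F1_seriesE, Series_mult_pow by (apply ex_series_hyp_coef; lra).
    rewrite (Series_ext _ (fun n => w ^ n)).
    - apply is_series_unique, is_series_geom, Hz.
    - intros n. rewrite hyp_coef_half_conv. ring. }
  rewrite <- sqrt_inv. symmetry. apply sqrt_lem_1; [|lra|exact Hsq].
  apply Rlt_le, Rinv_0_lt_compat. lra.
Qed.

Lemma hyp2F1_series_euler a b w : 0 <= a -> 0 <= b -> 0 <= w < 1 ->
  hyp2F1_series (a + 1/2) (b + 1/2) (a + b + 1/2) w =
  / sqrt (1 - w) * hyp2F1_series a b (a + b + 1/2) w.
Proof.
  intros Ha Hb Hw. assert (Hz : Rabs w < 1) by (rewrite Rabs_pos_eq; lra).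
  rewrite <- hyp2F1_series_half by exact Hw.
  rewrite !hyp2F1_seriesE, Series_mult_pow by (apply ex_series_hyp_coef; lra).
  apply Series_ext. intros n. rewrite hyp_coef_euler_conv by lra. reflexivity.
Qed.

(** * Continued fractions *)

Lemma Rdiv_le_self u v : 0 <= u -> 1 <= v -> u / v <= u.
Proof.
  intros Hu Hv. apply (Rmult_le_reg_r v); [lra|].
  unfold Rdiv. rewrite Rmult_assoc, Rinv_l by lra. nra.
Qed.

Lemma is_lim_seq_0_two_step_contraction (e d : nat -> R) (M th : R) :
  0 <= th < 1 -> (forall k, Rabs (e k) <= M) -> is_lim_seq d 0 ->
  (forall k, Rabs (e k) <= d k + th * Rabs (e (S (S k)))) -> is_lim_seq e 0.
Proof.
  intros Hth HM Hd Hrec.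
  assert (HM0 : 0 <= M) by (specialize (HM 0%nat); pose proof (Rabs_pos (e 0%nat)); lra).
  apply is_lim_seq_spec. intros eps. pose proof (cond_pos eps) as Heps.
  apply is_lim_seq_spec in Hd.
  destruct (Hd (mkposreal (eps * (1 - th) / 2) ltac:(apply Rdiv_lt_0_compat; nra)))
    as [N HN]; cbn in HN.
  assert (Hiter : forall p k, (N <= k)%nat -> Rabs (e k) <= eps / 2 + th ^ p * M).
  { induction p as [|p IH]; intros k Hk; [specialize (HM k); simpl; lra|].
    specialize (HN k Hk). rewrite Rminus_0_r in HN. apply Rabs_def2 in HN.
    specialize (IH (S (S k)) ltac:(lia)). specialize (Hrec k).
    simpl pow. nra. }
  destruct (pow_lt_1_zero th ltac:(rewrite Rabs_pos_eq; lra) (eps / (2 * (M + 1))))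
    as [p Hp]; [apply Rdiv_lt_0_compat; lra|].
  exists N. intros k Hk. rewrite Rminus_0_r.
  specialize (Hp p (le_n p)). rewrite Rabs_pos_eq in Hp by (apply pow_le; lra).
  assert (th ^ p * (M + 1) < eps / 2).
  { apply (Rmult_lt_reg_r (/ (M + 1))); [apply Rinv_0_lt_compat; lra|].
    replace (th ^ p * (M + 1) * / (M + 1)) with (th ^ p) by (field; lra).
    replace (eps / 2 * / (M + 1)) with (eps / (2 * (M + 1))) by (field; lra). exact Hp. }
  specialize (Hiter p k Hk). pose proof (pow_le th p ltac:(lra)). nra.
Qed.

(* One step of [t = 1 + a / t] contracts errors only by [a / (t T)], which may exceed 1;
   two steps contract by [a^2 / (t1 t2 T^2) <= a^2 / ((1 + a) T^2) < 1]. *)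
Lemma cont_frac_two_step_error t0 t1 t2 T a a0 a1 :
  1 <= t1 -> 1 <= t2 -> 1 <= T -> 0 < a -> a <= a0 -> a <= a1 ->
  t0 = 1 + a0 / t1 -> t1 = 1 + a1 / t2 -> T * T = T + a ->
  Rabs (t0 - T) <=
  (a0 - a) + a / T * (a1 - a) + a * a / ((1 + a) * (T * T)) * Rabs (t2 - T).
Proof.
  intros Ht1 Ht2 HT Ha Ha0 Ha1 E0 E1 HTT.
  assert (Hp : t1 * t2 = t2 + a1) by (rewrite E1; field; lra).
  set (X := (a0 - a) / t1). set (Y := a / T * (a1 - a) / (t1 * t2)).
  set (Z := a * a / ((t1 * t2) * (T * T))).
  assert (E : t0 - T = X - Y + Z * (t2 - T)).
  { unfold X, Y, Z. rewrite E0.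
    replace a1 with ((t1 - 1) * t2) by (rewrite E1; field; lra).
    replace a with (T * T - T) by lra. field. lra. }
  assert (HX : 0 <= X <= a0 - a)
    by (split; [apply Rdiv_le_0_compat | apply Rdiv_le_self]; lra).
  assert (HY : 0 <= Y <= a / T * (a1 - a)).
  { assert (0 <= a / T * (a1 - a)) by (apply Rmult_le_pos; [apply Rdiv_le_0_compat|]; lra).
    split; [apply Rdiv_le_0_compat | apply Rdiv_le_self]; nra. }
  assert (HZ : 0 <= Z <= a * a / ((1 + a) * (T * T))).
  { unfold Z, Rdiv. split; [apply Rmult_le_pos; [nra|apply Rlt_le, Rinv_0_lt_compat; nra]|].
    apply Rmult_le_compat_l; [nra|]. apply Rinv_le_contravar; nra. }
  rewrite E. eapply Rle_trans; [apply Rabs_triang|].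
  rewrite Rabs_mult, (Rabs_pos_eq Z) by lra.
  assert (Rabs (X - Y) <= X + Y) by (apply Rabs_le; lra).
  pose proof (Rabs_pos (t2 - T)). nra.
Qed.

Lemma cont_frac_lim (t al : nat -> R) (a : R) :
  0 < a -> (forall k, a <= al k) -> is_lim_seq al a ->
  (forall k, 0 < t k) -> (forall k, t k = 1 + al k / t (S k)) ->
  is_lim_seq t ((1 + sqrt (1 + 4 * a)) / 2).
Proof.
  intros Ha Hal Hlim Ht Hrec.
  set (T := (1 + sqrt (1 + 4 * a)) / 2).
  assert (Hs : sqrt (1 + 4 * a) * sqrt (1 + 4 * a) = 1 + 4 * a) by (apply sqrt_sqrt; lra).
  assert (Hs1 : 1 <= sqrt (1 + 4 * a))
    by (rewrite <- sqrt_1 at 1; apply sqrt_le_1_alt; lra).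
  assert (HTT : T * T = T + a) by (unfold T; nra).
  assert (HT : 1 <= T) by (unfold T; lra).
  assert (Ht1 : forall k, 1 <= t k).
  { intros k. rewrite Hrec. pose proof (Hal k). pose proof (Ht (S k)).
    assert (0 <= al k / t (S k)) by (apply Rdiv_le_0_compat; lra). lra. }
  destruct (filterlim_bounded al) as [A HA]; [exists a; exact Hlim|].
  assert (HtA : forall k, Rabs (t k - T) <= 1 + A + T).
  { intros k. specialize (HA k). change norm with Rabs in HA.
    pose proof (Rle_abs (al k)). pose proof (Ht1 k).
    assert (al k / t (S k) <= al k).
    { pose proof (Hal k). apply Rdiv_le_self; [lra | apply Ht1]. }
    pose proof (Hrec k). pose proof (Rabs_pos (al k)). apply Rabs_le. lra. }
  set (th := a * a / ((1 + a) * (T * T))).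
  assert (Hth : 0 <= th < 1).
  { unfold th. split; [apply Rdiv_le_0_compat; nra|].
    apply (Rmult_lt_reg_r ((1 + a) * (T * T))); [nra|].
    unfold Rdiv. rewrite Rmult_assoc, Rinv_l by nra. nra. }
  apply (is_lim_seq_ext (fun k => (t k - T) + T)); [intros k; ring|].
  replace (Finite T) with (Finite (0 + T)) by (f_equal; ring).
  apply is_lim_seq_plus'; [|apply is_lim_seq_const].
  apply (is_lim_seq_0_two_step_contraction _ (fun k => (al k - a) + a / T * (al (S k) - a))
           (1 + A + T) th Hth HtA).
  - replace 0 with ((a - a) + a / T * (a - a)) by ring.
    apply is_lim_seq_plus'; [|apply (is_lim_seq_scal_l _ (a / T) (a - a))];
      apply is_lim_seq_minus'; try apply is_lim_seq_const;
      [exact Hlim | apply (is_lim_seq_incr_1 al), Hlim].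
  - intros k.
    apply (cont_frac_two_step_error (t k) (t (S k)) (t (S (S k))) T a (al k) (al (S k))); auto.
Qed.

(** * The three-term recurrence *)

(* [x^2 k^2 y_(k+1) = (4 k^2 - 1) (y_(k-1) - y_k)] for [k >= 1], stated at [k + 1] to
   avoid truncated subtraction. *)
Definition three_term_rec (x : R) (y : nat -> R) : Prop :=
  forall k, x ^ 2 * (INR k + 1) ^ 2 * y (S (S k)) = (4 * (INR k + 1) ^ 2 - 1) * (y k - y (S k)).

Lemma three_term_rec_solve x y k : x <> 0 -> three_term_rec x y ->
  exists b, 3 / x ^ 2 <= b /\ y (S (S k)) = b * (y k - y (S k)).
Proof.
  intros Hx Hrec. pose proof (pos_INR k).
  assert (Hx2 : 0 < x ^ 2) by (apply pow2_gt_0; exact Hx).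
  assert (Hk : 0 < x ^ 2 * (INR k + 1) ^ 2) by (apply Rmult_lt_0_compat; nra).
  exists ((4 * (INR k + 1) ^ 2 - 1) / (x ^ 2 * (INR k + 1) ^ 2)). split.
  - replace ((4 * (INR k + 1) ^ 2 - 1) / (x ^ 2 * (INR k + 1) ^ 2))
      with (3 / x ^ 2 + ((INR k + 1) ^ 2 - 1) / (x ^ 2 * (INR k + 1) ^ 2)) by (field; lra).
    assert (0 <= ((INR k + 1) ^ 2 - 1) / (x ^ 2 * (INR k + 1) ^ 2))
      by (apply Rdiv_le_0_compat; nra).
    lra.
  - apply (Rmult_eq_reg_l (x ^ 2 * (INR k + 1) ^ 2)); [|lra].
    rewrite Hrec. field. lra.
Qed.

Lemma three_term_rec_growth x y m : x <> 0 -> three_term_rec x y -> y m * y (S m) <= 0 ->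
  forall p, y (m + p)%nat * y (S (m + p)) <= 0 /\
    (3 / x ^ 2) ^ p * (Rabs (y m) + Rabs (y (S m))) <=
    Rabs (y (m + p)%nat) + Rabs (y (S (m + p))).
Proof.
  intros Hx Hrec Hm.
  assert (Hq : 0 < 3 / x ^ 2) by (apply Rdiv_lt_0_compat; [lra | apply pow2_gt_0, Hx]).
  induction p as [|p [Hsign Hgrow]]; [rewrite Nat.add_0_r; split; simpl; lra|].
  replace (m + S p)%nat with (S (m + p)) by lia.
  set (j := (m + p)%nat) in *. clearbody j.
  destruct (three_term_rec_solve x y j Hx Hrec) as [b [Hb Hy]].
  assert (Habs : Rabs (y j - y (S j)) = Rabs (y j) + Rabs (y (S j))).
  { unfold Rabs. repeat destruct Rcase_abs; nra. }
  rewrite Hy. split; [nra|].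
  assert (Hb0 : 0 <= b) by (apply Rle_trans with (3 / x ^ 2); [apply Rlt_le|]; assumption).
  rewrite Rabs_mult, Habs, (Rabs_pos_eq b) by exact Hb0.
  rewrite <- (tech_pow_Rmult (3 / x ^ 2) p), Rmult_assoc.
  set (g := (3 / x ^ 2) ^ p * (Rabs (y m) + Rabs (y (S m)))) in *. clearbody g.
  pose proof (Rabs_pos (y (S j))). pose proof (Rabs_pos (y j)). nra.
Qed.

Lemma three_term_rec_pos x y C : 0 < x ^ 2 < 1 -> three_term_rec x y -> 0 < y 0%nat ->
  (forall k, Rabs (y k) <= C * 3 ^ k) -> forall k, 0 < y k.
Proof.
  intros Hx Hrec Hy0 Hbound k.
  assert (Hx0 : x <> 0) by (intros ->; simpl in Hx; lra).
  induction k as [|k IH]; [exact Hy0|].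
  destruct (Rlt_le_dec 0 (y (S k))) as [Hpos | Hnonpos]; [exact Hpos | exfalso].
  set (s := Rabs (y k) + Rabs (y (S k))).
  assert (Hs : 0 < s).
  { unfold s. rewrite (Rabs_pos_eq (y k)) by lra. pose proof (Rabs_pos (y (S k))). lra. }
  assert (Hsmall : forall p, s <= 4 * C * 3 ^ k * (x ^ 2) ^ p).
  { intros p.
    destruct (three_term_rec_growth x y k Hx0 Hrec ltac:(nra) p) as [_ Hgrow]. fold s in Hgrow.
    pose proof (Hbound (k + p)%nat) as B0. pose proof (Hbound (S (k + p))) as B1.
    rewrite <- tech_pow_Rmult, pow_add in B1. rewrite pow_add in B0.
    assert (H3 : (3 / x ^ 2) ^ p * (x ^ 2) ^ p = 3 ^ p)
      by (rewrite <- Rpow_mult_distr; f_equal; field; lra).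
    assert (Hxp : 0 < (x ^ 2) ^ p) by (apply pow_lt; lra).
    assert (H3p : 0 < 3 ^ p) by (apply pow_lt; lra).
    set (Q := (3 / x ^ 2) ^ p) in *. set (X := (x ^ 2) ^ p) in *.
    set (P3 := 3 ^ p) in *. set (K3 := 3 ^ k) in *. clearbody Q X P3 K3.
    apply (Rmult_le_reg_l P3); [exact H3p|].
    replace (P3 * s) with (X * (Q * s)) by (rewrite <- H3; ring).
    replace (P3 * (4 * C * K3 * X)) with (X * (4 * C * K3 * P3)) by ring.
    apply Rmult_le_compat_l; lra. }
  assert (Hlim : is_lim_seq (fun p => 4 * C * 3 ^ k * (x ^ 2) ^ p) 0).
  { replace (Finite 0) with (Finite (4 * C * 3 ^ k * 0)) by (f_equal; ring).
    apply (is_lim_seq_scal_l _ _ 0), is_lim_seq_geom. rewrite Rabs_pos_eq; lra. }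
  assert (Hle := is_lim_seq_le _ _ s 0 Hsmall (is_lim_seq_const s) Hlim).
  cbn in Hle. lra.
Qed.

Definition rec_coef (x : R) (k : nat) : R :=
  x ^ 2 * (INR k + 1) ^ 2 / (4 * (INR k + 1) ^ 2 - 1).

Lemma rec_coef_bounds x k :
  x ^ 2 / 4 <= rec_coef x k <= x ^ 2 / 4 + x ^ 2 / 4 * / (1 + INR k).
Proof.
  unfold rec_coef. pose proof (pos_INR k). pose proof (pow2_ge_0 x).
  assert (H4 : 0 < 4 * (INR k + 1) ^ 2 - 1) by nra.
  replace (x ^ 2 * (INR k + 1) ^ 2 / (4 * (INR k + 1) ^ 2 - 1))
    with (x ^ 2 / 4 + x ^ 2 / 4 * / (4 * (INR k + 1) ^ 2 - 1)) by (field; lra).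
  assert (/ (4 * (INR k + 1) ^ 2 - 1) <= / (1 + INR k)) by (apply Rinv_le_contravar; nra).
  assert (0 < / (4 * (INR k + 1) ^ 2 - 1)) by (apply Rinv_0_lt_compat; lra).
  nra.
Qed.

Lemma is_lim_seq_rec_coef x : is_lim_seq (rec_coef x) (x ^ 2 / 4).
Proof.
  apply (is_lim_seq_le_le (fun _ => x ^ 2 / 4) _
           (fun k => x ^ 2 / 4 + x ^ 2 / 4 * / (1 + INR k)));
    [apply rec_coef_bounds | apply is_lim_seq_const|].
  replace (Finite (x ^ 2 / 4)) with (Finite (x ^ 2 / 4 + x ^ 2 / 4 * 0)) by (f_equal; ring).
  apply is_lim_seq_plus'; [apply is_lim_seq_const|].
  apply (is_lim_seq_scal_l _ _ 0), is_lim_seq_inv_shift_INR. lra.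
Qed.

Lemma three_term_rec_cont_frac x y k : three_term_rec x y -> (forall k, 0 < y k) ->
  y k / y (S k) = 1 + rec_coef x k / (y (S k) / y (S (S k))).
Proof.
  intros Hrec Hy. unfold rec_coef.
  pose proof (pos_INR k). pose proof (Hy (S k)). pose proof (Hy (S (S k))).
  assert (E : y k = y (S k) + x ^ 2 * (INR k + 1) ^ 2 * y (S (S k)) / (4 * (INR k + 1) ^ 2 - 1))
    by (rewrite (Hrec k); field; nra).
  rewrite E at 1. field. nra.
Qed.

Lemma three_term_rec_ratio_lim x y : 0 < x -> three_term_rec x y -> (forall k, 0 < y k) ->
  is_lim_seq (fun k => x * y (S k) / y k) (2 * x / (1 + sqrt (1 + x ^ 2))).
Proof.
  intros Hx Hrec Hy.
  assert (Ht := cont_frac_lim (fun k => y k / y (S k)) (rec_coef x) (x ^ 2 / 4)).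
  replace (1 + 4 * (x ^ 2 / 4)) with (1 + x ^ 2) in Ht by field.
  apply (is_lim_seq_ext (fun k => x / (y k / y (S k)))).
  { intros k. pose proof (Hy k). pose proof (Hy (S k)). field. lra. }
  pose proof (sqrt_pos (1 + x ^ 2)).
  replace (2 * x / (1 + sqrt (1 + x ^ 2))) with (x / ((1 + sqrt (1 + x ^ 2)) / 2))
    by (field; lra).
  apply is_lim_seq_div'; [apply is_lim_seq_const | apply Ht | lra].
  - nra.
  - intros k. apply rec_coef_bounds.
  - apply is_lim_seq_rec_coef.
  - intros k. apply Rdiv_lt_0_compat; apply Hy.
  - intros k. apply three_term_rec_cont_frac; assumption.
Qed.

(** * The functions S_k *)

Lemma Sk_small k x : x ^ 2 < 1 ->
  Sk k x = hyp2F1_series (INR k / 2) ((INR k + 1) / 2) (INR k + 1/2) (- x ^ 2).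
Proof.
  intros Hx. unfold Sk, hyp2F1. destruct Rlt_dec as [_ | H].
  - f_equal. field.
  - exfalso. apply H. rewrite Rabs_Ropp, Rabs_pos_eq; [exact Hx | apply pow2_ge_0].
Qed.

Lemma sqr_div_1_plus_sqr_bounds x : 0 <= x ^ 2 / (1 + x ^ 2) < 1.
Proof.
  pose proof (pow2_ge_0 x). split; [apply Rdiv_le_0_compat; lra|].
  apply (Rmult_lt_reg_r (1 + x ^ 2)); [lra|].
  unfold Rdiv. rewrite Rmult_assoc, Rinv_l by lra. lra.
Qed.

Lemma Sk_large k x : 1 <= x ^ 2 ->
  Sk k x = / sqrt (1 + x ^ 2) ^ k *
           hyp2F1_series (INR k / 2) (INR k / 2) (INR k + 1/2) (x ^ 2 / (1 + x ^ 2)).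
Proof.
  intros Hx. unfold Sk, hyp2F1. destruct Rlt_dec as [H | _].
  - exfalso. rewrite Rabs_Ropp, Rabs_pos_eq in H by apply pow2_ge_0. lra.
  - replace (1 - - x ^ 2) with (1 + x ^ 2) by ring.
    assert (Hpos : 0 < 1 + x ^ 2) by lra.
    f_equal; [|f_equal; field; lra].
    rewrite Rpower_Ropp, <- (Rpower_pow k (sqrt (1 + x ^ 2))), <- Rpower_sqrt, Rpower_mult
      by (try apply sqrt_lt_R0; exact Hpos).
    do 2 f_equal. field.
Qed.

Lemma Sk_large_euler k x : 1 <= x ^ 2 ->
  Sk k x = / sqrt (1 + x ^ 2) ^ S k *
           hyp2F1_series ((INR k + 1) / 2) ((INR k + 1) / 2) (INR k + 1/2) (x ^ 2 / (1 + x ^ 2)).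
Proof.
  intros Hx. set (w := x ^ 2 / (1 + x ^ 2)).
  assert (Hw := sqr_div_1_plus_sqr_bounds x). fold w in Hw.
  assert (Hrho : / sqrt (1 - w) = sqrt (1 + x ^ 2)).
  { replace (1 - w) with (/ (1 + x ^ 2)) by (unfold w; field; lra).
    rewrite sqrt_inv, Rinv_inv. reflexivity. }
  pose proof (hyp2F1_series_euler (INR k / 2) (INR k / 2) w) as E.
  replace (INR k / 2 + 1/2) with ((INR k + 1) / 2) in E by field.
  replace (INR k / 2 + INR k / 2 + 1/2) with (INR k + 1/2) in E by field.
  rewrite Sk_large, E, Hrho by (pose proof (pos_INR k); lra).
  assert (Hs : 0 < sqrt (1 + x ^ 2)) by (apply sqrt_lt_R0; lra).
  rewrite <- (tech_pow_Rmult (sqrt (1 + x ^ 2)) k).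
  assert (Hsk : 0 < sqrt (1 + x ^ 2) ^ k) by (apply pow_lt, Hs).
  set (p := sqrt (1 + x ^ 2) ^ k) in *. clearbody p.
  unfold w. field. lra.
Qed.

Lemma Sk_rec_small x : x ^ 2 < 1 -> three_term_rec x (fun k => Sk k x).
Proof.
  intros Hx k. cbv beta. rewrite !Sk_small, !S_INR by exact Hx.
  pose proof (pos_INR k).
  set (a := INR k / 2). set (b := (INR k + 1) / 2). set (c := INR k + 1/2).
  replace (hyp2F1_series b ((INR k + 1 + 1) / 2) (INR k + 1 + 1/2) (- x ^ 2))
    with (hyp2F1_series (a + 1) b (c + 1) (- x ^ 2))
    by (rewrite hyp2F1_series_sym; unfold a, b, c; f_equal; field).
  replace (hyp2F1_series ((INR k + 1 + 1) / 2) ((INR k + 1 + 1 + 1) / 2) (INR k + 1 + 1 + 1/2)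
             (- x ^ 2))
    with (hyp2F1_series (a + 1) (b + 1) (c + 2) (- x ^ 2))
    by (unfold a, b, c; f_equal; field).
  rewrite hyp2F1_series_contig_ac
    by (unfold a, b, c; try rewrite Rabs_Ropp, Rabs_pos_eq by apply pow2_ge_0; lra).
  unfold a, b, c. field. lra.
Qed.

Lemma Sk_rec_large x : 1 <= x ^ 2 -> three_term_rec x (fun k => Sk k x).
Proof.
  intros Hx k. cbv beta.
  rewrite (Sk_large_euler k), (Sk_large (S k)), (Sk_large_euler (S (S k))), !S_INR by exact Hx.
  pose proof (pos_INR k).
  set (w := x ^ 2 / (1 + x ^ 2)). set (s := sqrt (1 + x ^ 2)).
  set (a := (INR k + 1) / 2). set (c := INR k + 1/2).
  replace (hyp2F1_series a a (INR k + 1 + 1/2) w) with (hyp2F1_series a a (c + 1) w)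
    by (unfold c; f_equal; ring).
  replace (hyp2F1_series ((INR k + 1 + 1 + 1) / 2) ((INR k + 1 + 1 + 1) / 2)
             (INR k + 1 + 1 + 1/2) w)
    with (hyp2F1_series (a + 1) (a + 1) (c + 2) w) by (unfold a, c; f_equal; field).
  assert (Hss : s * s = 1 + x ^ 2) by (apply sqrt_sqrt; lra).
  assert (Hs : 0 < s) by (apply sqrt_lt_R0; lra).
  assert (Hw := sqr_div_1_plus_sqr_bounds x). fold w in Hw.
  rewrite <- Rmult_minus_distr_l, hyp2F1_series_contig_c
    by (unfold a, c; try rewrite Rabs_pos_eq; lra).
  rewrite <- (tech_pow_Rmult s (S (S k))), <- (tech_pow_Rmult s (S k)).
  assert (Hp : 0 < s ^ S k) by (apply pow_lt, Hs).
  set (p := s ^ S k) in *. clearbody p s.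
  unfold w, a, c. rewrite <- Hss. field. lra.
Qed.

Lemma Sk_rec x : three_term_rec x (fun k => Sk k x).
Proof.
  destruct (Rlt_le_dec (x ^ 2) 1); [apply Sk_rec_small | apply Sk_rec_large]; assumption.
Qed.

Lemma Sk_coef_le_pow3 k n : hyp_coef (INR k / 2) ((INR k + 1) / 2) (INR k + 1/2) n <= 3 ^ k.
Proof.
  destruct k as [|k]; [simpl; apply hyp_coef_le_1; lra|].
  induction k as [|k IH]; [simpl; apply Rle_trans with 1; [apply hyp_coef_le_1|]; lra|].
  rewrite (S_INR (S k)).
  set (K := INR (S k)) in *.
  assert (HK : 1 <= K) by (unfold K; rewrite S_INR; pose proof (pos_INR k); lra).
  replace (hyp_coef ((K + 1) / 2) ((K + 1 + 1) / 2) (K + 1 + 1/2) n)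
    with (hyp_coef ((K + 1) / 2) (K / 2 + 1) (K + 1/2 + 1) n) by (f_equal; field).
  eapply Rle_trans; [apply hyp_coef_shift_le; lra|].
  pose proof (hyp_coef_nonneg (K / 2) ((K + 1) / 2) (K + 1/2) n ltac:(lra) ltac:(lra) ltac:(lra)).
  assert ((K + 1/2) / (K / 2) <= 3).
  { apply (Rmult_le_reg_r (K / 2)); [lra|].
    unfold Rdiv at 1. rewrite Rmult_assoc, Rinv_l by lra. lra. }
  rewrite <- tech_pow_Rmult. nra.
Qed.

Lemma Sk_bound_small k x : x ^ 2 < 1 -> Rabs (Sk k x) <= / (1 - x ^ 2) * 3 ^ k.
Proof.
  intros Hx. rewrite Sk_small, hyp2F1_seriesE by exact Hx.
  pose proof (pos_INR k).
  assert (Hz : Rabs (- x ^ 2) = x ^ 2) by (rewrite Rabs_Ropp; apply Rabs_pos_eq, pow2_ge_0).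
  destruct (Series_pow_abs_le (hyp_coef (INR k / 2) ((INR k + 1) / 2) (INR k + 1/2)) (3 ^ k)
              (- x ^ 2)) as [_ Hle].
  - intros n. rewrite Rabs_pos_eq by (apply hyp_coef_nonneg; lra). apply Sk_coef_le_pow3.
  - rewrite Hz. exact Hx.
  - rewrite Hz in Hle. unfold Rdiv in Hle. rewrite Rmult_comm. exact Hle.
Qed.

Lemma Sk_pos k x : x <> 0 -> 0 < Sk k x.
Proof.
  intros Hx0. pose proof (pow2_gt_0 x Hx0) as Hx2.
  destruct (Rlt_le_dec (x ^ 2) 1) as [Hx | Hx].
  - apply (three_term_rec_pos x (fun k => Sk k x) (/ (1 - x ^ 2))); [lra | apply Sk_rec | |].
    + rewrite Sk_small by exact Hx. replace (INR 0 / 2) with 0 by (simpl; field).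
      rewrite hyp2F1_series_0_l; [lra | simpl; lra | simpl; lra |].
      rewrite Rabs_Ropp, Rabs_pos_eq; lra.
    + intros j. apply Sk_bound_small, Hx.
  - rewrite Sk_large by exact Hx.
    apply Rmult_lt_0_compat; [apply Rinv_0_lt_compat, pow_lt, sqrt_lt_R0; lra|].
    pose proof (pos_INR k). pose proof (sqr_div_1_plus_sqr_bounds x).
    eapply Rlt_le_trans; [|apply hyp2F1_series_ge_1]; lra.
Qed.

Theorem lemma2 : forall x : R, 0 <= x ->
  exists l : R,
    is_lim_seq (fun k : nat => x * Sk (S k) x / Sk k x) (Finite l) /\
    0 <= l <= 2.
Proof.
  intros x Hx. destruct (Req_dec x 0) as [-> | Hx0].
  - exists 0. split; [|lra].
    apply (is_lim_seq_ext (fun _ => 0)); [intros k; unfold Rdiv; ring | apply is_lim_seq_const].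
  - exists (2 * x / (1 + sqrt (1 + x ^ 2))). split.
    + apply (three_term_rec_ratio_lim x (fun k => Sk k x));
        [lra | apply Sk_rec | intros k; apply Sk_pos, Hx0].
    + assert (Hs : x <= sqrt (1 + x ^ 2)).
      { rewrite <- (sqrt_pow2 x) at 1 by exact Hx. apply sqrt_le_1_alt. lra. }
      split; [apply Rdiv_le_0_compat; lra|].
      apply (Rmult_le_reg_r (1 + sqrt (1 + x ^ 2))); [lra|].
      unfold Rdiv. rewrite Rmult_assoc, Rinv_l by lra. lra.
Qed.
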